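(* Let $\kappa > 1$. Consider a finite set $\mathcal{S}$ of sensors placed in a square region $R$ of dimensions $s \times s$, where each sensor $i$ has sensing region $D_i$ equal to the closed disk of radius $1$ centered at its location, and each sensor has an initial battery life of $1$ unit of time. Let $d_R$ denote the depth of $R$ (defined below) and let $\mathcal{L}^*$ denote the maximum lifetime of the system under optimal scheduling (defined below). Then $\mathcal{L}^* = O(\kappa \cdot d_R)$, i.e., there is an absolute constant $c>0$, independent of the instance, such that $\mathcal{L}^* \le c\,\kappa\, d_R$.
   Context: A pair of points $(p,q)$ is a $\kappa$-pair if the distance between them is $\kappa$. A curve is a $\kappa$-curve if its endpoints form a $\kappa$-pair. A set of sensors $C \subseteq \mathcal{S}$ is a $\kappa$-weak cover if every $\kappa$-curve contained in $R$ intersects $\bigcup_{i \in C} D_i$. A point $p$ is covered by sensor $i$ if $p \in D_i$. The depth of a point $p$ is the number of sensors in $\mathcal{S}$ covering $p$, and the depth $d_R$ of the region $R$ is the maximum depth of any point of $R$. A schedule consists of a collection $\{C_1,\dots,C_k\}$ of $\kappa$-weak covers together with activation times $\delta_1,\dots,\delta_k \ge 0$ (cover $C_j$ is active for time $\delta_j$), subject to the battery constraint that each sensor's total active time $\sum_{j : i \in C_j} \delta_j$ is at most its battery life $1$. The lifetime of such a schedule is $\sum_{j=1}^k \delta_j$, and $\mathcal{L}^*$ is the maximum (supremum) lifetime over all such schedules. *)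

From HB Require Import structures.
From mathcomp Require Import all_boot all_order all_algebra.
From mathcomp Require Import all_classical all_reals all_analysis.
From mathcomp Require Import Rstruct Rstruct_topology.
From Stdlib Require Import Rdefinitions.

Set Implicit Arguments.
Unset Strict Implicit.
Unset Printing Implicit Defensive.
Import Order.TTheory GRing.Theory Num.Theory.
Local Open Scope classical_set_scope.
Local Open Scope ring_scope.

Definition plane_pt := (R * R)%type.

Definition dist (p q : plane_pt) : R :=
  Num.sqrt ((p.1 - q.1) ^+ 2 + (p.2 - q.2) ^+ 2).

Definition Region (s : R) : set plane_pt :=
  [set p | 0 <= p.1 <= s /\ 0 <= p.2 <= s].

Definition unit_I : set R := [set t | 0 <= t <= 1].

Definition covered n (loc : 'I_n -> plane_pt) (i : 'I_n) (p : plane_pt) : bool :=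
  dist p (loc i) <= 1.

Definition kappa_curve_in (kappa s : R) (g : R -> plane_pt) : Prop :=
  {within unit_I, continuous g} /\
  (forall t, unit_I t -> Region s (g t)) /\
  dist (g 0) (g 1) = kappa.

Definition weak_cover n (loc : 'I_n -> plane_pt) (kappa s : R) (C : {set 'I_n}) : Prop :=
  forall g, kappa_curve_in kappa s g ->
    exists t, unit_I t /\ exists2 i, i \in C & covered loc i (g t).

Definition depth n (loc : 'I_n -> plane_pt) (p : plane_pt) : nat :=
  #|[set i | covered loc i p]|.

Definition depth_region n (loc : 'I_n -> plane_pt) (s : R) : \bar R :=
  ereal_sup [set ((depth loc p)%:R)%:E | p in Region s].

Definition schedule n := seq ({set 'I_n} * R).

Definition valid_schedule n (loc : 'I_n -> plane_pt) (kappa s : R) (S : schedule n) : Prop :=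
  (forall Cd, Cd \in S -> weak_cover loc kappa s Cd.1 /\ 0 <= Cd.2) /\
  (forall i : 'I_n, \sum_(Cd <- S | i \in Cd.1) Cd.2 <= 1).

Definition lifetime n (S : schedule n) : R := \sum_(Cd <- S) Cd.2.

Definition Lstar n (loc : 'I_n -> plane_pt) (kappa s : R) : \bar R :=
  ereal_sup [set (lifetime S)%:E | S in valid_schedule loc kappa s].

From HB Require Import structures.
From mathcomp Require Import all_boot all_order all_algebra.
From mathcomp Require Import ring lra.
From mathcomp Require Import all_classical all_reals all_analysis.
From mathcomp Require Import Rstruct Rstruct_topology.
From Stdlib Require Import Rdefinitions.

Set Implicit Arguments.
Unset Strict Implicit.
Unset Printing Implicit Defensive.
Import Order.TTheory GRing.Theory Num.Theory.
Local Open Scope ring_scope.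

(* Two region points at distance kappa yield an L-shaped kappa-curve with legs
   of length a, b <= kappa inside the region.  Every weak cover must meet it, so
   it contains a sensor from the O(kappa)-area band of width 1 around the curve.
   Cutting the band into cells of side 1/2, sensors sharing a cell cover each
   other's centre, so each cell holds at most d_R sensors, and the band holds
   O(kappa d_R) sensors.  Each active cover uses one of them, whence the
   lifetime is at most the size of the band. *)

Section Schedules.
Variables (n : nat) (loc : 'I_n -> plane_pt) (kappa s : R).

Lemma lifetime_le_card_transversal (A : {set 'I_n}) (S : schedule n) :
  (forall Cd, Cd \in S -> 0 <= Cd.2 /\ exists2 i, i \in A & i \in Cd.1) ->
  (forall i, \sum_(Cd <- S | i \in Cd.1) Cd.2 <= 1) ->
  lifetime S <= #|A|%:R.
Proof.
move=> hitA battery.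
apply: (@le_trans _ _ (\sum_(Cd <- S) \sum_(i in A) (if i \in Cd.1 then Cd.2 else 0))).
  rewrite /lifetime big_seq [X in _ <= X]big_seq; apply: ler_sum => Cd SCd.
  have [Cd2_ge0 [i iA iC]] := hitA Cd SCd.
  rewrite (bigD1 i) //= iC lerDl; apply: sumr_ge0 => j _; by case: ifP.
rewrite exchange_big /= -sum1_card natr_sum; apply: ler_sum => i _.
by rewrite -big_mkcond.
Qed.

Lemma Lstar_le_card_transversal (A : {set 'I_n}) :
  (forall C, weak_cover loc kappa s C -> exists2 i, i \in A & i \in C) ->
  (Lstar loc kappa s <= (#|A|%:R)%:E)%E.
Proof.
move=> hitA; apply: ge_ereal_sup => _ [S [covers battery] <-].
rewrite lee_fin; apply: lifetime_le_card_transversal => // Cd SCd.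
by have [/hitA ? ?] := covers Cd SCd.
Qed.

End Schedules.

Lemma normr_sub1_le_dist (p q : plane_pt) : `|p.1 - q.1| <= dist p q.
Proof. by rewrite /dist -sqrtr_sqr ler_sqrt ?lerDl ?addr_ge0 ?sqr_ge0. Qed.

Lemma normr_sub2_le_dist (p q : plane_pt) : `|p.2 - q.2| <= dist p q.
Proof. by rewrite /dist -sqrtr_sqr ler_sqrt ?lerDr ?addr_ge0 ?sqr_ge0. Qed.

Lemma dist_le1_of_close (p q : plane_pt) :
  `|p.1 - q.1| < 1/2 -> `|p.2 - q.2| < 1/2 -> dist p q <= 1.
Proof.
rewrite !ltr_norml => /andP[? ?] /andP[? ?].
by rewrite /dist -sqrtr1 ler_sqrt //; nra.
Qed.

Lemma truncn_double_eq_close (u v : R) : 0 <= u -> 0 <= v ->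
  Num.truncn (2 * u) = Num.truncn (2 * v) -> `|u - v| < 1/2.
Proof.
move=> u_ge0 v_ge0 E.
have /andP[u1 u2] := truncn_itv (mulr_ge0 (ler0n R 2) u_ge0).
have /andP[v1 v2] := truncn_itv (mulr_ge0 (ler0n R 2) v_ge0).
rewrite E -addn1 natrD in u1 u2; rewrite -addn1 natrD in v2.
by rewrite ltr_norml; apply/andP; split; lra.
Qed.

Definition in_rect (x0 y0 w h : R) (p : plane_pt) : bool :=
  (x0 <= p.1 <= x0 + w) && (y0 <= p.2 <= y0 + h).
(* Without this, numerals given to [R] arguments are read in Stdlib's [R_scope]. *)
Arguments in_rect (x0 y0 w h)%_ring_scope p.

Section Counting.
Variables (n : nat) (loc : 'I_n -> plane_pt) (m : nat).
Hypothesis depth_le : forall j, (depth loc (loc j) <= m)%nat.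

Lemma card_le_classes_depth (K : finType) (B : {set 'I_n}) (f : 'I_n -> K) :
  {in B &, forall i j, f i = f j -> covered loc i (loc j)} ->
  (#|B| <= #|K| * m)%nat.
Proof.
move=> cov; rewrite -sum1_card (partition_big f xpredT) //= -sum_nat_const.
apply: leq_sum => c _.
case: (pickP [pred i | (i \in B) && (f i == c)]) => [j /andP[jB /eqP fj] | none];
  last by rewrite big_pred0.
rewrite sum1dep_card; apply: leq_trans (depth_le j); apply: subset_leq_card.
apply/fintype.subsetP => i; rewrite !inE => /andP[iB /eqP fi].
by apply: cov => //; rewrite fi fj.
Qed.

Lemma card_in_rect_le (x0 y0 w h : R) : 0 <= w -> 0 <= h ->
  #|[set i | in_rect x0 y0 w h (loc i)]|%:R <= (2 * w + 1) * (2 * h + 1) * m%:R.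
Proof.
move=> w_ge0 h_ge0; set B := [set i | _].
pose kx := Num.truncn (2 * w); pose ky := Num.truncn (2 * h).
pose cx i := Num.truncn (2 * ((loc i).1 - x0)).
pose cy i := Num.truncn (2 * ((loc i).2 - y0)).
pose cell i : 'I_kx.+1 * 'I_ky.+1 := (inord (cx i), inord (cy i)).
have cell_bound i : i \in B -> (cx i < kx.+1)%nat /\ (cy i < ky.+1)%nat.
  by rewrite inE => /andP[/andP[? ?] /andP[? ?]]; rewrite !ltnS; split;
    apply: le_truncn; lra.
have cellE i j : i \in B -> j \in B -> cell i = cell j -> cx i = cx j /\ cy i = cy j.
  move=> /cell_bound[xi yi] /cell_bound[xj yj] [Ex Ey].
  by rewrite -(inordK xi) -(inordK yi) Ex Ey !inordK.
have : (#|B| <= #|{: 'I_kx.+1 * 'I_ky.+1}| * m)%nat.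
  apply: (card_le_classes_depth (f := cell)) => i j iB jB /(cellE _ _ iB jB)[Ex Ey].
  move: iB jB; rewrite !inE => /andP[/andP[? ?] /andP[? ?]] /andP[/andP[? ?] /andP[? ?]].
  rewrite /covered; apply: dist_le1_of_close.
    rewrite (_ : _ - _ = ((loc j).1 - x0) - ((loc i).1 - x0)); last by ring.
    by apply: truncn_double_eq_close; rewrite ?subr_ge0.
  rewrite (_ : _ - _ = ((loc j).2 - y0) - ((loc i).2 - y0)); last by ring.
  by apply: truncn_double_eq_close; rewrite ?subr_ge0.
rewrite card_prod !card_ord -(ler_nat R) !natrM -(natr1 kx) -(natr1 ky).
move=> /le_trans; apply; apply: ler_wpM2r => //.
by apply: ler_pM; rewrite ?addr_ge0 ?lerD2r ?truncn_le ?mulr_ge0.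
Qed.

End Counting.

Lemma max_depth_le_depth_region n (loc : 'I_n -> plane_pt) (s : R) (p : plane_pt) :
  Region s p -> (forall i, Region s (loc i)) ->
  ((((\max_(j : 'I_n) depth loc (loc j))%nat)%:R)%:E <= depth_region loc s)%E.
Proof.
move=> Rp Rloc.
have depth_le x : Region s x -> (((depth loc x)%:R)%:E <= depth_region loc s)%E.
  by move=> Rx; apply: ereal_sup_ubound; exists x.
apply: (big_ind (fun x : nat => ((x%:R)%:E <= depth_region loc s)%E)).
- by apply: le_trans (depth_le p Rp); rewrite lee_fin ler0n.
- by move=> x y ? ?; case: (leqP x y).
- by move=> i _; exact: depth_le.
Qed.

(* The L-shaped path from (0,0) to (a,0) to (a,b), traversed on [0,1]. *)
Definition lpath (a b t : R) : plane_pt :=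
  (a * Num.min (2 * t) 1, b * Num.max (2 * t - 1) 0).
Arguments lpath (a b t)%_ring_scope.

Lemma lpath_continuous (a b : R) : continuous (lpath a b).
Proof.
move=> x; apply: (@cvg_pair _ _ _ _ (nbhs (a * Num.min (2 * x) 1))
  (nbhs (b * Num.max (2 * x - 1) 0))); apply: cvgMl_tmp.
- apply: (@continuous_min R R (fun t => 2 * t) (fun=> 1) x); last exact: cvg_cst.
  by apply: cvgMl_tmp; exact: cvg_id.
- apply: (@continuous_max R R (fun t => 2 * t - 1) (fun=> 0) x); last exact: cvg_cst.
  by apply: cvgB; [apply: cvgMl_tmp; exact: cvg_id | exact: cvg_cst].
Qed.

Lemma lpath_on_legs (a b t : R) : 0 <= a -> 0 <= b -> unit_I t ->
  (0 <= (lpath a b t).1 <= a /\ (lpath a b t).2 = 0) \/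
  ((lpath a b t).1 = a /\ 0 <= (lpath a b t).2 <= b).
Proof.
move=> a_ge0 b_ge0 /andP[t_ge0 t_le1]; rewrite /lpath /=.
case: (lerP (2 * t) 1) => t_half.
- left; rewrite (max_r (_ : 2 * t - 1 <= 0)) ?mulr0; last lra.
  by split => //; rewrite mulr_ge0 ?ler_piMr //; lra.
- right; rewrite (max_l (_ : 0 <= 2 * t - 1)) ?mulr1; last lra.
  by split => //; rewrite mulr_ge0 ?ler_piMr //; lra.
Qed.

Lemma dist_lpath_ends (a b : R) :
  dist (lpath a b 0) (lpath a b 1) = Num.sqrt (a ^+ 2 + b ^+ 2).
Proof.
rewrite /dist /lpath /= mulr0 mulr1 (@min_l _ _ 0) ?ler01 // (@min_r _ _ 2) ?ler1n //.
rewrite (@max_r _ _ (0 - 1)) ?(@max_l _ _ (2 - 1)) ?subr_ge0 ?subr_le0 ?ler01 ?ler1n //.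
by congr Num.sqrt; ring.
Qed.

Lemma lpath_kappa_curve (kappa s a b : R) :
  0 <= a <= s -> 0 <= b <= s -> Num.sqrt (a ^+ 2 + b ^+ 2) = kappa ->
  kappa_curve_in kappa s (lpath a b).
Proof.
move=> /andP[a_ge0 a_le] /andP[b_ge0 b_le] ab_kappa.
split; first exact: continuous_subspaceT (@lpath_continuous a b).
split; last by rewrite dist_lpath_ends.
move=> t /(lpath_on_legs a_ge0 b_ge0) [[/andP[? ?] ?] | [? /andP[? ?]]];
  by split; apply/andP; split; lra.
Qed.

Lemma lpath_region_kappa_curve (s : R) (p q : plane_pt) : Region s p -> Region s q ->
  kappa_curve_in (dist p q) s (lpath `|p.1 - q.1| `|p.2 - q.2|).
Proof.
move=> [/andP[? ?] /andP[? ?]] [/andP[? ?] /andP[? ?]].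
apply: lpath_kappa_curve; last by rewrite !real_normK ?num_real.
  by rewrite normr_ge0 ler_norml; apply/andP; split; lra.
by rewrite normr_ge0 ler_norml; apply/andP; split; lra.
Qed.

Definition band n (loc : 'I_n -> plane_pt) (kappa a : R) : {set 'I_n} :=
  [set i | in_rect 0 0 (kappa + 1) 1 (loc i)]
  :|: [set i | in_rect (a - 1) 0 2 (kappa + 1) (loc i)].
Arguments band n loc (kappa a)%_ring_scope.

Lemma covered_lpath_in_band n (loc : 'I_n -> plane_pt) (kappa a b t : R) (i : 'I_n) :
  0 <= a <= kappa -> 0 <= b <= kappa -> unit_I t ->
  0 <= (loc i).1 -> 0 <= (loc i).2 -> covered loc i (lpath a b t) ->
  i \in band loc kappa a.
Proof.
move=> /andP[a_ge0 a_le] /andP[b_ge0 b_le] It x_ge0 y_ge0 cov.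
have := le_trans (normr_sub1_le_dist _ _) cov.
have := le_trans (normr_sub2_le_dist _ _) cov.
rewrite !inE !ler_norml => /andP[? ?] /andP[? ?].
case: (lpath_on_legs a_ge0 b_ge0 It) => [[/andP[? ?] ?] | [? /andP[? ?]]].
- by apply/orP; left; apply/andP; split; apply/andP; split; lra.
- by apply/orP; right; apply/andP; split; apply/andP; split; lra.
Qed.

Lemma card_band_le n (loc : 'I_n -> plane_pt) (m : nat) (kappa a : R) :
  (forall j, (depth loc (loc j) <= m)%nat) -> 1 <= kappa ->
  #|band loc kappa a|%:R <= 40 * kappa * m%:R.
Proof.
move=> depth_le kappa_ge1.
apply: le_trans (_ : #|[set i | in_rect 0 0 (kappa + 1) 1 (loc i)]|%:R
  + #|[set i | in_rect (a - 1) 0 2 (kappa + 1) (loc i)]|%:R <= _).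
  by rewrite -natrD ler_nat (leq_card_setU _ _).1.
apply: le_trans (lerD (card_in_rect_le depth_le _ _ _ _)
  (card_in_rect_le depth_le _ _ _ _)) _; try lra.
by rewrite -mulrDl ler_wpM2r ?ler0n //; lra.
Qed.

Theorem theorem1 :
  exists c : R, 0 < c /\
    forall (kappa s : R) (n : nat) (loc : 'I_n -> plane_pt),
      1 < kappa ->
      (exists p q, Region s p /\ Region s q /\ dist p q = kappa) ->
      (forall i, Region s (loc i)) ->
      (Lstar loc kappa s <= (c * kappa)%:E * depth_region loc s)%E.
Proof.
exists 40; split; first lra.
move=> kappa s n loc kappa_gt1 [p [q [Rp [Rq pq_kappa]]]] Rloc.
have curve := lpath_region_kappa_curve Rp Rq; rewrite pq_kappa in curve.
have a_le : 0 <= `|p.1 - q.1| <= kappa by rewrite normr_ge0 -pq_kappa normr_sub1_le_dist.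
have b_le : 0 <= `|p.2 - q.2| <= kappa by rewrite normr_ge0 -pq_kappa normr_sub2_le_dist.
pose m := (\max_(j : 'I_n) depth loc (loc j))%nat.
have depth_le j : (depth loc (loc j) <= m)%nat by exact: leq_bigmax.
have L_band : (Lstar loc kappa s <= (#|band loc kappa `|p.1 - q.1| |%:R)%:E)%E.
  apply: Lstar_le_card_transversal => C /(_ _ curve) [t [It [i iC cov]]].
  exists i => //; have [/andP[? _] /andP[? _]] := Rloc i.
  exact: (covered_lpath_in_band a_le b_le It).
apply: le_trans L_band (le_trans _ (lee_wpmul2l _ (max_depth_le_depth_region Rp Rloc))).
  by rewrite -EFinM lee_fin card_band_le // ltW.
by rewrite lee_fin; lra.
Qed.
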